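(* (1) Let $f:(0,\infty)\to\mathbb{R}$ be completely monotone and suppose $\int_0^{t_0}|f(t)|t^\beta\,\mathrm{d}t<\infty$ for some $\beta\in(-1,\infty)$ and $t_0>0$. Then for every $k\in\mathbb{N}$ there is $C_{k,\beta}>0$ with $$\int_0^{t_0}|f^{(k)}(t)|\,t^{k+\beta}\,\mathrm{d}t\le C_{k,\beta}\int_0^{t_0}f(t)\,t^\beta\,\mathrm{d}t.$$ (2) Let $f:(0,\infty)\to\mathbb{R}$ be smooth with $\int_0^{t_0}|f(t)|t^\beta\,\mathrm{d}t<\infty$ for some $\beta\in(-1,\infty)$ and $t_0>0$, and suppose $f'$ has constant sign. Then $$\int_0^{t_0}|f'(t)|\,t^{1+\beta}\,\mathrm{d}t\le(1+\beta)\int_0^{t_0}|f(t)|\,t^\beta\,\mathrm{d}t+|f(t_0)|\,t_0^{1+\beta}.$$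
   Context: A function $g:(0,\infty)\to\mathbb{R}$ is completely monotone if it is $C^\infty$ and $(-1)^ng^{(n)}(t)\ge0$ for all $t>0$ and $n\in\mathbb{N}$. *)

From HB Require Import structures.
From mathcomp Require Import all_boot all_order all_algebra.
From mathcomp Require Import all_classical all_reals all_analysis.
Set Implicit Arguments. Unset Strict Implicit. Unset Printing Implicit Defensive.
Import Order.TTheory GRing.Theory Num.Theory.
Local Open Scope ring_scope.
Local Open Scope classical_set_scope.

Definition smooth_pos {R : realType} (f : R -> R) : Prop :=
  forall (n : nat) (t : R), 0 < t -> derivable (derive1n n f) t 1.

Definition completely_monotone {R : realType} (f : R -> R) : Prop :=
  smooth_pos f /\
  forall (n : nat) (t : R), 0 < t -> 0 <= (-1) ^+ n * derive1n n f t.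

Definition int0 {R : realType} (t0 : R) (g : R -> R) : \bar R :=
  (\int[@lebesgue_measure R]_(t in `]0%R, t0%R[%classic) (g t)%:E)%E.

(* When g' has constant sign on (0, oo), integrate |g'| against
   the weight x^(1+beta) - d^(1+beta), which vanishes at d: integration by
   parts on [d, t0] leaves only the boundary term at t0 and (1+beta) times an
   integral of x^beta g, and letting d -> 0 (Fatou) bounds the integral of
   |g'| x^(1+beta).  Part (2) is this for g = f.  In part (1), f^(k+1) has the
   sign of (-1)^(k+1) while the boundary term (-1)^(k+1) f^(k)(t0) is <= 0, so
   induction on k gives C = prod_(i<k) (1 + i + beta). *)

From HB Require Import structures.
From mathcomp Require Import all_boot all_order all_algebra.
From mathcomp Require Import all_classical all_reals all_analysis.
From mathcomp Require Import lra measurable_realfun.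
Import Order.TTheory GRing.Theory Num.Theory.
Import numFieldNormedType.Exports.

Set Implicit Arguments.
Unset Strict Implicit.

Local Open Scope ring_scope.

Section positive_halfline.
Context {R : realType}.
Notation mu := (@lebesgue_measure R).
Local Open Scope classical_set_scope.
Implicit Types (h : R -> R) (s t : R).

Lemma derivable1_continuous h x : derivable h x 1 -> {for x, continuous h}.
Proof. by move=> dh; apply: differentiable_continuous; apply/derivable1_diffP. Qed.

Lemma measurable_fun_continuous_pos h (D : set R) : D `<=` [set x | 0 < x] ->
  (forall t, 0 < t -> {for t, continuous h}) -> measurable_fun D h.
Proof.
move=> D0 ch; have D_sub : D `<=` `]0, +oo[.
  by move=> x /D0; rewrite /= in_itv /= andbT.
apply: (measurable_funS _ D_sub) => //.
apply: open_continuous_measurable_fun; first exact: interval_open.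
by move=> x; rewrite inE /= in_itv /= andbT; apply: ch.
Qed.

Lemma derivable_oo_LRcontinuous_pos h a b : 0 < a -> a < b ->
  (forall t, 0 < t -> derivable h t 1) -> derivable_oo_LRcontinuous h a b.
Proof.
move=> a0 ab dh; split.
- by move=> x; rewrite in_itv /= => /andP[ax _]; apply: dh; apply: lt_trans ax.
- by apply: cvg_at_right_filter; apply: derivable1_continuous; apply: dh.
- apply: cvg_at_left_filter; apply: derivable1_continuous.
  by apply: dh; apply: lt_trans ab.
Qed.

Lemma derivable_powR_pos (q t : R) : 0 < t -> derivable (fun x : R => x `^ q) t 1.
Proof. by move=> t0; apply: derivable_powR; rewrite in_itv /= andbT. Qed.

Lemma derive1Z h s t : derivable h t 1 -> derive1 (s \*: h) t = s * derive1 h t.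
Proof. by move=> dh; rewrite !derive1E deriveZ. Qed.

Lemma derivable_derive1Z h s t : 0 < t -> (forall t, 0 < t -> derivable h t 1) ->
  derivable (derive1 h) t 1 -> derivable (derive1 (s \*: h)) t 1.
Proof.
move=> t0 dh dh'; apply: (@near_eq_derivable _ _ _ (s \*: derive1 h)).
  by near=> y; rewrite /= derive1Z //; apply: dh; near: y; exact: lt_nbhsr.
exact: derivableZ.
Unshelve. all: by end_near.
Qed.

Lemma abse_integral_itvcc_le h (d t0 : R) : 0 < d ->
  (forall t, 0 < t -> {for t, continuous h}) ->
  (`| \int[mu]_(x in `[d, t0]) (h x)%:E | <=
   \int[mu]_(x in `]0%R, t0[) `|h x|%:E)%E.
Proof.
move=> d0 ch.
have mh (D : set R) : D `<=` [set x | 0 < x] -> measurable_fun D (fun x => `|h x|%:E).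
  move=> D0; apply/measurable_EFinP; apply: measurable_fun_continuous_pos => // t t_gt0.
  by apply: (@continuous_comp _ _ _ h Num.norm); [exact: ch|exact: norm_continuous].
have d_pos b (x : R) : [set` Interval (BLeft d) b] x -> 0 < x.
  by case: b => [[] y|[]] /=; rewrite in_itv /= => /andP[/(lt_le_trans d0)].
apply: le_trans (le_abse_integral _ _ _) _ => //.
  by apply/measurable_EFinP; apply: measurable_fun_continuous_pos => // x /d_pos.
rewrite -integral_itv_bndo_bndc; last first.
  by apply: mh => x /d_pos.
apply: ge0_subset_integral => //.
  by apply: mh => x /=; rewrite in_itv /= => /andP[].
by move=> x /=; rewrite !in_itv /= => /andP[dx ->]; rewrite (lt_le_trans d0 dx).
Qed.

End positive_halfline.

Section truncation.
Context {R : realType}.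
Notation mu := (@lebesgue_measure R).
Local Open Scope classical_set_scope.
Variables (phi : R -> R) (p t0 : R).
Hypotheses (p_gt0 : 0 < p) (t0_gt0 : 0 < t0)
  (mphi : measurable_fun `]0, t0[ phi) (phi_ge0 : forall x, 0 < x -> 0 <= phi x).

Let cut n : R := t0 * harmonic n.+1.

Let cut_gt0 n : 0 < cut n.
Proof. exact: mulr_gt0 (harmonic_gt0 _). Qed.

Let cut_lt n : cut n < t0.
Proof. by rewrite /cut /= gtr_pMr // invf_lt1 // ltr1n. Qed.

Let cut_cvg0 : cut n @[n --> \oo] --> 0.
Proof.
rewrite -(mulr0 t0); apply: cvgM; first exact: cvg_cst.
by rewrite (cvg_shiftS (@harmonic R)); exact: cvg_harmonic.
Qed.

Let powR_cut_cvg0 : cut n `^ p @[n --> \oo] --> 0.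
Proof.
exact: (cvg_at_rightP _ _ _).1 (powR_cvg0 p_gt0) cut (conj cut_gt0 cut_cvg0).
Qed.

Let trunc n : R -> \bar R :=
  (fun x => (phi x * (x `^ p - cut n `^ p))%:E) \_ `[cut n, +oo[.

Let truncE n x :
  trunc n x = if cut n <= x then (phi x * (x `^ p - cut n `^ p))%:E else 0%E.
Proof. by rewrite /trunc patchE mem_setE /= in_itv /= andbT. Qed.

Let trunc_ge0 n x : 0 < x -> (0 <= trunc n x)%E.
Proof.
move=> x0; rewrite truncE; case: ifP => // cx.
rewrite lee_fin mulr_ge0 ?phi_ge0 // subr_ge0.
by apply: ge0_ler_powR; rewrite ?nnegrE ?(ltW p_gt0) ?(ltW (cut_gt0 n)) ?(ltW x0).
Qed.

Let trunc_cvg x : 0 < x -> trunc ^~ x @ \oo --> (phi x * x `^ p)%:E.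
Proof.
move=> x0; apply: (@cvg_trans _ ((phi x * (x `^ p - cut n `^ p))%:E @[n --> \oo])).
  apply: near_eq_cvg; near=> n; rewrite truncE ifT //.
  by near: n; exact: cvgr_le cut_cvg0 _ x0.
apply: cvg_EFin; first exact: nearW.
have -> : phi x * x `^ p = phi x * (x `^ p - 0) by rewrite subr0.
by apply: cvgM; [exact: cvg_cst|apply: cvgB; [exact: cvg_cst|exact: powR_cut_cvg0]].
Unshelve. all: by end_near.
Qed.

Let limn_einf_trunc x : 0 < x -> limn_einf (trunc ^~ x) = (phi x * x `^ p)%:E.
Proof.
move=> x0; have trunc_x := trunc_cvg x0.
by rewrite is_cvg_limn_einfE; [exact: cvg_lim trunc_x|exact: cvgP trunc_x].
Qed.

Let measurable_trunc n : measurable_fun `]0, t0[ (trunc n).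
Proof.
apply/measurable_restrict => //; apply/measurable_EFinP.
apply: measurable_funM; first exact: measurable_funS mphi.
by apply: measurable_funB => //; exact: measurable_funS (measurable_powR p).
Qed.

Let integral_trunc n : (\int[mu]_(x in `]0%R, t0[) trunc n x =
  \int[mu]_(x in `[cut n, t0[) (phi x * (x `^ p - cut n `^ p))%:E)%E.
Proof.
rewrite /trunc -integral_mkcondr; congr integral.
apply/seteqP; split => x /=; rewrite !in_itv /= ?andbT.
  by move=> [/andP[_ ->] ->].
by move=> /andP[cx ->]; rewrite cx (lt_le_trans (cut_gt0 n) cx).
Qed.

Lemma ge0_integral_powR_le_shifted (B : \bar R) :
  (forall d, 0 < d -> d < t0 ->
    (\int[mu]_(x in `[d, t0[) (phi x * (x `^ p - d `^ p))%:E <= B)%E) ->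
  (\int[mu]_(x in `]0%R, t0[) (phi x * x `^ p)%:E <= B)%E.
Proof.
move=> truncated_le.
have pos x : `]0, t0[ x -> 0 < x by rewrite /= in_itv /= => /andP[].
under eq_integral => x /[!inE] /pos x0 do rewrite -(limn_einf_trunc x0).
apply: le_trans (fatou _ _ _ _) _ => //; first by move=> n x /pos x0; exact: trunc_ge0.
rewrite limn_einf_lim; apply: lime_le; first exact: is_cvg_einfs.
apply: nearW => n; apply: le_trans (ereal_inf_lbound _) _; first by exists n => /=.
by have := truncated_le _ (cut_gt0 n) (cut_lt n); rewrite -integral_trunc.
Qed.

End truncation.

Section shifted_weight.
Context {R : realType}.
Notation mu := (@lebesgue_measure R).
Local Open Scope classical_set_scope.
Variables (g : R -> R) (beta : R).
Hypotheses (dg : forall t, 0 < t -> derivable g t 1)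
  (dg' : forall t, 0 < t -> derivable (derive1 g) t 1).

Lemma integral_shifted_powR_derive1 (d t0 : R) : 0 < d -> d < t0 ->
  (\int[mu]_(x in `[d, t0]) ((x `^ (1 + beta) - d `^ (1 + beta)) * derive1 g x)%:E =
   ((t0 `^ (1 + beta) - d `^ (1 + beta)) * g t0)%:E -
   \int[mu]_(x in `[d, t0]) ((1 + beta) * x `^ beta * g x)%:E)%E.
Proof.
move=> d0 dt0.
pose w x := x `^ (1 + beta) - d `^ (1 + beta).
have dw t : 0 < t -> derivable w t 1.
  by move=> t0'; apply: derivableB => //; exact: derivable_powR_pos.
have within_cont (h : R -> R) : (forall t, 0 < t -> derivable h t 1) ->
    {within `[d, t0], continuous h}.
  move=> dh; apply: derivable_within_continuous => x.
  by rewrite in_itv /= => /andP[dx _]; apply: dh; exact: lt_le_trans dx.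
rewrite (@integration_by_parts _ w g (fun x => (1 + beta) * x `^ beta) (derive1 g)) //.
- by rewrite /w subrr mul0r subr0.
- apply: within_cont => t t0'; apply: derivableM => //; exact: derivable_powR_pos.
- exact: derivable_oo_LRcontinuous_pos.
- move=> x; rewrite in_itv /= => /andP[dx _]; have x0 := lt_trans d0 dx.
  rewrite derive1E deriveB // ?derive_cst ?subr0 -?derive1E; last first.
    exact: derivable_powR_pos.
  by rewrite powR_derive1 ?in_itv /= ?andbT // (addrC 1) addrK.
- exact: within_cont.
- exact: derivable_oo_LRcontinuous_pos.
Qed.

Lemma integral_shifted_powR_derive1_le (d t0 : R) : -1 < beta -> 0 < d -> d < t0 ->
  (\int[mu]_(x in `[d, t0[) (derive1 g x * (x `^ (1 + beta) - d `^ (1 + beta)))%:E <=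
   (Num.max (g t0) 0 * t0 `^ (1 + beta))%:E +
   (1 + beta)%:E * int0 t0 (fun t => `|g t| * t `^ beta)%R)%E.
Proof.
move=> beta_gt d0 dt0; have p0 : 0 <= 1 + beta by lra.
have cont_powR (q t : R) : 0 < t -> {for t, continuous (fun x : R => x `^ q)}.
  by move=> t0'; apply: derivable1_continuous; exact: derivable_powR_pos.
have cont_g t : 0 < t -> {for t, continuous g}.
  by move=> t0'; apply: derivable1_continuous; exact: dg.
rewrite integral_itv_bndo_bndc; last first.
  apply/measurable_EFinP; apply: measurable_fun_continuous_pos.
    by move=> x /=; rewrite in_itv /= => /andP[/(lt_le_trans d0)].
  move=> t t0'; apply: continuousM; first by apply: derivable1_continuous; exact: dg'.
  by apply: continuousB; [exact: cont_powR|exact: cvg_cst].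
under eq_integral do rewrite mulrC.
rewrite integral_shifted_powR_derive1 //; apply: leeD.
  have dp_ge0 : 0 <= d `^ (1 + beta) by exact: powR_ge0.
  have dp_le : d `^ (1 + beta) <= t0 `^ (1 + beta).
    by apply: ge0_ler_powR; rewrite ?nnegrE // ltW //; exact: lt_trans dt0.
  have g_le : g t0 <= Num.max (g t0) 0 by rewrite le_max lexx.
  have max_ge0 : 0 <= Num.max (g t0) 0 by rewrite le_max lexx orbT.
  by rewrite lee_fin; nra.
apply: le_trans (lee_abs _) _; rewrite abseN.
apply: le_trans (abse_integral_itvcc_le t0 d0 _) _.
  move=> t t0'; apply: continuousM; last exact: cont_g.
  by apply: continuousM; [exact: cvg_cst|exact: cont_powR].
have normE x : `|(1 + beta) * x `^ beta * g x|%:E =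
    ((1 + beta)%:E * (`|g x| * x `^ beta)%:E)%E.
  by rewrite -EFinM !normrM (ger0_norm p0) (ger0_norm (powR_ge0 _ _)) mulrAC -mulrA.
under eq_integral do rewrite normE.
rewrite ge0_integralZl_EFin //.
  by move=> x _; rewrite lee_fin mulr_ge0 ?powR_ge0.
apply/measurable_EFinP; apply: measurable_fun_continuous_pos.
  by move=> x /=; rewrite in_itv /= => /andP[].
move=> t t0'; apply: continuousM; last exact: cont_powR.
by apply: (@continuous_comp _ _ _ g Num.norm); [exact: cont_g|exact: norm_continuous].
Qed.

Lemma ge0_derive1_integral_powR_le (t0 : R) : -1 < beta -> 0 < t0 ->
  (forall t, 0 < t -> 0 <= derive1 g t) ->
  (int0 t0 (fun t => derive1 g t * t `^ (1 + beta))%R <=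
   (Num.max (g t0) 0 * t0 `^ (1 + beta))%:E +
   (1 + beta)%:E * int0 t0 (fun t => `|g t| * t `^ beta)%R)%E.
Proof.
move=> beta_gt t0_gt0 g'_ge0; apply: ge0_integral_powR_le_shifted => //.
- by lra.
- apply: measurable_fun_continuous_pos => [x|t t0'].
    by rewrite /= in_itv /= => /andP[].
  by apply: derivable1_continuous; exact: dg'.
- by move=> d d0 dt0; exact: integral_shifted_powR_derive1_le.
Qed.

End shifted_weight.

Section constant_sign.
Context {R : realType}.
Variables (g : R -> R) (beta t0 : R).
Hypotheses (beta_gt : -1 < beta) (t0_gt0 : 0 < t0)
  (dg : forall t, 0 < t -> derivable g t 1)
  (dg' : forall t, 0 < t -> derivable (derive1 g) t 1).

Lemma abs_derive1_integral_powR_le (s : R) : `|s| = 1 ->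
  (forall t, 0 < t -> 0 <= s * derive1 g t) ->
  (int0 t0 (fun t => `|derive1 g t| * t `^ (1 + beta))%R <=
   (Num.max (s * g t0) 0 * t0 `^ (1 + beta))%:E +
   (1 + beta)%:E * int0 t0 (fun t => `|g t| * t `^ beta)%R)%E.
Proof.
move=> s1 sg'_ge0.
have dsg t : 0 < t -> derivable (s \*: g) t 1.
  by move=> t0'; apply: derivableZ; exact: dg.
have dsg' t : 0 < t -> derivable (derive1 (s \*: g)) t 1.
  by move=> t0'; apply: derivable_derive1Z => //; exact: dg'.
have sg'E t : 0 < t -> derive1 (s \*: g) t = `|derive1 g t|.
  move=> t0'; rewrite derive1Z; last exact: dg.
  by have := ger0_norm (sg'_ge0 t t0'); rewrite normrM s1 mul1r => ->.
have := ge0_derive1_integral_powR_le dsg dsg' beta_gt t0_gt0.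
have -> : int0 t0 (fun t => derive1 (s \*: g) t * t `^ (1 + beta))%R =
          int0 t0 (fun t => `|derive1 g t| * t `^ (1 + beta))%R.
  by apply: eq_integral => x /[!inE] /= /[!in_itv] /= /andP[x0 _]; rewrite sg'E.
have -> : int0 t0 (fun t => `|(s \*: g) t| * t `^ beta)%R =
          int0 t0 (fun t => `|g t| * t `^ beta)%R.
  by apply: eq_integral => x _ /=; rewrite normrM s1 mul1r.
apply; move=> t t0'; rewrite sg'E //.
Qed.

End constant_sign.

Section derivative_bounds.
Context {R : realType}.

Lemma constant_sign_integral_derive1_powR_le (beta : R) (f : R -> R) (t0 : R) :
  -1 < beta -> 0 < t0 -> smooth_pos f ->
  ((forall t, 0 < t -> 0 <= derive1 f t) \/ (forall t, 0 < t -> derive1 f t <= 0)) ->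
  (int0 t0 (fun t => `|derive1 f t| * t `^ (1 + beta))%R <=
   (1 + beta)%:E * int0 t0 (fun t => `|f t| * t `^ beta)%R +
   (`|f t0| * t0 `^ (1 + beta))%:E)%E.
Proof.
move=> beta_gt t0_gt0 f_smooth f'_sign.
have [s s1 sf'_ge0] :
    exists2 s : R, `|s| = 1 & forall t, 0 < t -> 0 <= s * derive1 f t.
  case: f'_sign => [f'_ge0|f'_le0].
    by exists 1; rewrite ?normr1 // => t t0'; rewrite mul1r; exact: f'_ge0.
  exists (-1); rewrite ?normrN1 // => t t0'.
  by rewrite mulN1r oppr_ge0; exact: f'_le0.
have := abs_derive1_integral_powR_le beta_gt t0_gt0 (f_smooth 0%N) (f_smooth 1%N).
move=> /(_ _ s1 sf'_ge0) /le_trans; apply.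
rewrite addeC leeD2l // lee_fin ler_wpM2r ?powR_ge0 // ge_max normr_ge0 andbT.
by rewrite (le_trans (ler_norm _)) // normrM s1 mul1r.
Qed.

Lemma completely_monotone_integral_derive1n_powR_le (beta : R) (k : nat)
    (f : R -> R) (t0 : R) : -1 < beta -> 0 < t0 -> completely_monotone f ->
  (int0 t0 (fun t => `|derive1n k f t| * t `^ (k%:R + beta))%R <=
   (\prod_(i < k) (1 + (i%:R + beta)))%:E * int0 t0 (fun t => f t * t `^ beta)%R)%E.
Proof.
move=> beta_gt t0_gt0 [f_smooth f_cm]; elim: k => [|k IH].
  rewrite big_ord0 mul1e le_eqVlt; apply/orP; left; apply/eqP.
  apply: eq_integral => x /[!inE] /= /[!in_itv] /= /andP[x0 _].
  by rewrite add0r ger0_norm //; have := f_cm 0%N x x0; rewrite expr0 mul1r.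
have kbeta_gt : -1 < k%:R + beta by have := ler0n R k; lra.
pose s : R := (-1) ^+ k.+1.
have s1 : `|s| = 1 by rewrite normrX normrN1 expr1n.
have fk'_smooth t : 0 < t -> derivable (derive1 (derive1n k f)) t 1.
  by rewrite -derive1nS; exact: f_smooth.
have s_fk'_ge0 t : 0 < t -> 0 <= s * derive1 (derive1n k f) t.
  by rewrite -derive1nS; exact: f_cm.
have -> : k.+1%:R + beta = 1 + (k%:R + beta) by rewrite mulrS addrA.
rewrite derive1nS.
have := abs_derive1_integral_powR_le kbeta_gt t0_gt0 (f_smooth k) fk'_smooth.
move=> /(_ _ s1 s_fk'_ge0).
have -> : Num.max (s * derive1n k f t0) 0 = 0.
  by apply/max_r; rewrite /s exprS mulN1r mulNr oppr_le0; exact: f_cm.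
rewrite mul0r add0e => /le_trans; apply.
rewrite big_ord_recr /= mulrC EFinM -muleA.
apply: lee_pmul => //.
- by rewrite lee_fin; lra.
- by apply: integral_ge0 => x _; rewrite lee_fin mulr_ge0 // powR_ge0.
Qed.

End derivative_bounds.

Theorem lemma6p4 (R : realType) :
  (* (1) *)
  (forall (beta : R) (k : nat), -1 < beta ->
     exists C : R, 0 < C /\
       forall (f : R -> R) (t0 : R), 0 < t0 ->
         completely_monotone f ->
         (int0 t0 (fun t => `|f t| * t `^ beta)%R < +oo)%E ->
         (int0 t0 (fun t => `|derive1n k f t| * t `^ (k%:R + beta))%R
            <= C%:E * int0 t0 (fun t => f t * t `^ beta)%R)%E)
  /\
  (* (2) *)
  (forall (beta : R) (f : R -> R) (t0 : R), -1 < beta -> 0 < t0 ->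
     smooth_pos f ->
     (int0 t0 (fun t => `|f t| * t `^ beta)%R < +oo)%E ->
     ((forall t, 0 < t -> 0 <= derive1 f t) \/
      (forall t, 0 < t -> derive1 f t <= 0)) ->
     (int0 t0 (fun t => `|derive1 f t| * t `^ (1 + beta))%R
        <= (1 + beta)%R%:E * int0 t0 (fun t => `|f t| * t `^ beta)%R
           + (`|f t0| * t0 `^ (1 + beta))%R%:E)%E).
Proof.
split.
- move=> beta k beta_gt; exists (\prod_(i < k) (1 + (i%:R + beta))); split.
    by apply: prodr_gt0 => i _; have := ler0n R i; lra.
  by move=> f t0 t0_gt0 f_cm _; exact: completely_monotone_integral_derive1n_powR_le.
- move=> beta f t0 beta_gt t0_gt0 f_smooth _.
  exact: constant_sign_integral_derive1_powR_le.
Qed.
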